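(* Let $G$ be a 3-connected graph. If $G$ is 3-colourable, then the $G_3^0$-blocked graph of $G$ is the overlap graph of a family of subtrees of a tree with exactly 3 leaves.
   Context: Two sets $a,b$ overlap if $a\cap b\neq\emptyset$, $a\setminus b\neq\emptyset$, $b\setminus a\neq\emptyset$; the overlap graph of a family of subtrees (nonempty connected node sets) of a tree has one vertex per subtree, two being adjacent iff their subtrees overlap. $G_3^0$: vertices $v_s,v_b$ joined by 3 internally disjoint three-vertex paths $v_s-x_i-v_b$, no other edges. The $G_d^u$-blocked graph $G''$ of $G$ (here $d=3,u=0$): let $G'=(V',E')$ be the disjoint union of six copies of $G$. The vertex set of $G''$ is $V_1\cup V_2\cup V_3\cup V_4$ (pairwise disjoint), where $V_1=V'$ (vertex-representatives), $V_2$ contains one new vertex for each edge of $E'$ (edge-representatives), $V_3=\{f(v): v\in V_1\}$ is a set of new vertices in bijection $f$ with $V_1$ (brothers), and $V_4$ is the vertex set of a copy of $G_d^u$. Edges of $G''$: $v\in V_1$ is adjacent to the edge-representative of $e\in E'$ iff $v$ is an endpoint of $e$; $V_2\cup V_3$ is a clique; each $v\in V_1$ is adjacent to $f(v)$; every vertex of $V_2\cup V_3$ is adjacent to $v_s$ and $v_b$; the edges of $G_d^u$; no other edges. *)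

From mathcomp Require Import all_boot.
Set Implicit Arguments. Unset Strict Implicit. Unset Printing Implicit Defensive.

Definition simple_graph (T : finType) (e : rel T) : Prop :=
  symmetric e /\ irreflexive e.

Definition restrict (T : finType) (e : rel T) (A : {set T}) : rel T :=
  [rel x y | [&& e x y, x \in A & y \in A]].

Definition k_connected (k : nat) (T : finType) (e : rel T) : Prop :=
  k < #|T| /\
  forall S : {set T}, #|S| < k ->
    forall x y, x \notin S -> y \notin S -> connect (restrict e (~: S)) x y.

Definition colourable (k : nat) (T : finType) (e : rel T) : Prop :=
  exists c : T -> 'I_k, forall x y, e x y -> c x != c y.

Definition connected_graph (T : finType) (e : rel T) : Prop :=
  forall x y, connect e x y.

Definition has_cycle (T : finType) (e : rel T) : Prop :=
  exists (x : T) (p : seq T),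
    [/\ 2 <= size p, uniq (x :: p), path e x p & e (last x p) x].

Definition is_tree (T : finType) (e : rel T) : Prop :=
  [/\ simple_graph e, connected_graph e & ~ has_cycle e].

Definition degree (T : finType) (e : rel T) (x : T) : nat := #|[set y | e x y]|.

Definition leaves (T : finType) (e : rel T) : {set T} :=
  [set x | degree e x == 1].

Definition subtree (T : finType) (e : rel T) (A : {set T}) : Prop :=
  A != set0 /\ forall x y, x \in A -> y \in A -> connect (restrict e A) x y.

Definition overlap (T : finType) (a b : {set T}) : bool :=
  [&& a :&: b != set0, a :\: b != set0 & b :\: a != set0].

Definition overlap_graph_of_subtrees_k_leaves (k : nat) (I : finType)
    (adj : rel I) : Prop :=
  exists (T : finType) (e : rel T) (S : I -> {set T}),
    [/\ is_tree e, #|leaves e| = k,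
        forall i, subtree e (S i)
      & forall i j, adj i j = overlap (S i) (S j)].

Section Blocked.
Variables (V : finType) (adj : rel V).

Definition is_edge (A : {set V}) : bool :=
  [exists x, exists y, adj x y && (A == [set x; y])].

Definition edgeT : finType := {A : {set V} | is_edge A}.

(* vertices of G_3^0 : inl true = v_s, inl false = v_b, inr i = x_i *)
Definition G30T : finType := (bool + 'I_3)%type.

(* V1 = vertex-representatives (copy index, vertex) of G' (six copies),
   V2 = edge-representatives (copy index, edge),
   V3 = brothers f(i,v), V4 = copy of G_3^0 *)
Definition blockedT : finType :=
  ((('I_6 * V) + ('I_6 * edgeT)) + (('I_6 * V) + G30T))%type.

Definition blocked_half (u w : blockedT) : bool :=
  match u, w with
  (* vertex-representative -- edge-representative of an incident edge *)
  | inl (inl (i, v)), inl (inr (j, f)) => (i == j) && (v \in val f)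
  (* V2 u V3 is a clique *)
  | inl (inr _), inl (inr _) => u != w
  | inl (inr _), inr (inl _) => true
  | inr (inl _), inr (inl _) => u != w
  (* v -- f(v) *)
  | inl (inl (i, v)), inr (inl (j, x)) => (i == j) && (v == x)
  (* V2 u V3 adjacent to v_s and v_b *)
  | inl (inr _), inr (inr (inl _)) => true
  | inr (inl _), inr (inr (inl _)) => true
  (* edges of G_3^0 : v_s - x_i and v_b - x_i *)
  | inr (inr (inl _)), inr (inr (inr _)) => true
  | _, _ => false
  end.

Definition blocked_adj : rel blockedT :=
  fun u w => blocked_half u w || blocked_half w u.

End Blocked.

From mathcomp Require Import all_boot zify.
Set Implicit Arguments. Unset Strict Implicit. Unset Printing Implicit Defensive.

(* Take a spider with three long legs, one per colour.  A vertex-representative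
   v becomes a segment of two nodes on the leg of its colour, at a depth
   reserved for v; every other vertex becomes a ball around the centre,
   described by how deep it reaches into each leg.  Edge-representatives and
   brothers are balls of the same positive total depth, so two of them overlap
   iff they differ, which yields the clique V2 u V3.  A ball overlaps the
   segment of v iff its depth on that leg ends inside the segment: an
   edge-representative reaches exactly the reserved depths of its two
   endpoints and stays shallow on the third leg, a brother reaches exactly
   that of its own vertex.  Finally v_s is a whole leg, v_b two whole legs,
   and every x_i is the centre with its neighbour on the third leg, which lies
   inside every ball of the clique.  The three leaves are the ends of the
   legs. *)

Lemma overlapC (T : finType) (A B : {set T}) : overlap A B = overlap B A.
Proof. by rewrite /overlap setIC (andbC (A :\: B != set0)). Qed.

Lemma overlapxx (T : finType) (A : {set T}) : overlap A A = false.
Proof. by rewrite /overlap setDv eqxx andbF. Qed.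

Lemma sum_eq_exists_gt (I : finType) (f g : I -> nat) :
  \sum_i f i = \sum_i g i -> [exists i, f i != g i] -> [exists i, g i < f i].
Proof.
move=> sum_fg /existsP[i0 ne_i0]; apply/existsPn => g_ge.
have f_le i : true -> f i <= g i ?= iff (f i == g i).
  by move=> _; apply: leqif_eq; rewrite leqNgt g_ge.
have := (leqif_sum f_le).2; rewrite sum_fg eqxx => /esym/forallP/(_ i0).
by rewrite (negbTE ne_i0).
Qed.

Lemma exists_neq_fun (I : finType) (B : eqType) (f g : I -> B) :
  ~ f =1 g -> [exists l, f l != g l].
Proof.
move=> ne; case: existsP => // no_l; case: ne => l.
by apply/eqP/negPn/negP => ne_l; apply: no_l; exists l.
Qed.

Lemma orb_neq_sym (T : eqType) (a b : T) : (a != b) || (b != a) = (a != b).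
Proof. by rewrite eq_sym orbb. Qed.

Lemma exists_neq_iff (A : eqType) (I : finType) (B : eqType) (a a' : A)
    (f f' : I -> B) :
  (f =1 f' <-> a = a') -> [exists l, f l != f' l] = (a != a').
Proof.
move=> [eq_a f_eq]; apply/idP/idP => [/existsP[l ne_l]|ne].
  by apply: contraNneq ne_l => /f_eq/(_ l)->.
by apply: exists_neq_fun => /eq_a eq_aa'; rewrite eq_aa' eqxx in ne.
Qed.

Lemma exists_seq_argmax (T : eqType) (h : T -> nat) (x0 : T) s :
  exists2 m, m \in x0 :: s & forall z, z \in x0 :: s -> h z <= h m.
Proof.
elim: s x0 => [|y s IH] x0.
  by exists x0 => [|z]; rewrite ?inE // => /eqP->.
have [m m_in m_max] := IH y; have [le_x0m|lt_mx0] := leqP (h x0) (h m).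
  by exists m => [|z]; rewrite inE ?m_in ?orbT // => /orP[/eqP->|/m_max].
by exists x0 => [|z]; rewrite inE ?eqxx // => /orP[/eqP->//|/m_max]; lia.
Qed.

Section Spider.
Variables (k n : nat).

(* [None] is the centre; [Some (l, j)] is the node at distance [j + 1] from
   the centre on leg [l]. *)
Definition spider : finType := option ('I_k * 'I_n.+1).

Definition height (x : spider) : nat := if x is Some (_, j) then j.+1 else 0.

Definition parent (x : spider) : spider :=
  if x is Some (l, j) then (if j == 0 :> nat then None else Some (l, inord j.-1))
  else None.

Definition spider_adj : rel spider :=
  fun x y => ((x != None) && (y == parent x)) || ((y != None) && (x == parent y)).

Lemma height_parent x : x != None -> (height (parent x)).+1 = height x.
Proof.
case: x => [[l j]|] //= _; have [-> //|j_gt0] := eqVneq (j : nat) 0.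
by rewrite /= inordK; have := ltn_ord j; lia.
Qed.

Lemma spider_adj_sym : symmetric spider_adj.
Proof. by move=> x y; rewrite /spider_adj orbC. Qed.

Lemma spider_adj_parent x : x != None -> spider_adj x (parent x).
Proof. by move=> x_ne; rewrite /spider_adj x_ne eqxx. Qed.

Lemma spider_adj_height x y :
  spider_adj x y -> height x = (height y).+1 \/ height y = (height x).+1.
Proof. by case/orP => /andP[x_ne /eqP->]; [left|right]; rewrite height_parent. Qed.

Lemma spider_adj_down x y : spider_adj x y -> height y < height x -> y = parent x.
Proof. by case/orP => /andP[y_ne /eqP E] //; subst x; have := height_parent y_ne; lia. Qed.

Lemma spider_adj_irr : irreflexive spider_adj.
Proof. by move=> x; apply/negP => /spider_adj_height; lia. Qed.

Lemma connect_centre x : connect spider_adj x None.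
Proof.
elim: {x}(height x) {-2}x (leqnn (height x)) => [|h IH] x x_h.
  by case: x x_h => [[l j]|].
have [-> //|x_ne] := eqVneq x None.
apply: connect_trans (connect1 (spider_adj_parent x_ne)) (IH _ _).
by have := height_parent x_ne; lia.
Qed.

Lemma spider_connected : connected_graph spider_adj.
Proof.
move=> x y; apply: connect_trans (connect_centre x) _.
by rewrite (sym_connect_sym spider_adj_sym) connect_centre.
Qed.


(* A highest vertex of a cycle has both cycle neighbours below it, so both
   are its parent. *)
Lemma spider_acyclic : ~ has_cycle spider_adj.
Proof.
move=> [x [p [p_size p_uniq p_path p_last]]].
have p_cycle : cycle spider_adj (x :: p) by rewrite /cycle rcons_path p_path p_last.
have [m m_in m_max] := exists_seq_argmax height x p.
have {p_size} long : 2 < size (x :: p) by [].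
case/splitPr: m_in long p_cycle p_uniq m_max => p1 p2.
rewrite -(size_rot (size p1)) -(rot_cycle (size p1)) -(rot_uniq (size p1)).
rewrite rot_size_cat cat_cons => + + + m_max.
have {}m_max z : z \in m :: p2 ++ p1 -> height z <= height m.
  by move=> z_in; apply: m_max; rewrite -(mem_rot (size p1)) rot_size_cat.
move: (p2 ++ p1) m_max => [|a [|a' q]] m_max // _.
rewrite /cycle rcons_path /= => /andP[/andP[adj_ma _] adj_last] /and3P[_ a_notin _].
have below z : spider_adj m z -> z \in [:: m, a, a' & q] -> z = parent m.
  move=> adj_mz /m_max le_zm; apply: (spider_adj_down adj_mz).
  by case: (spider_adj_height adj_mz); lia.
rewrite spider_adj_sym in adj_last.
have last_in : last a' q \in [:: m, a, a' & q] by do 2 apply: mem_behead; exact: mem_last.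
move: a_notin; rewrite (below a) ?inE ?eqxx ?orbT // -(below _ adj_last) //.
by rewrite -in_cons mem_last.
Qed.

Lemma spider_is_tree : is_tree spider_adj.
Proof.
split; [split|exact: spider_connected|exact: spider_acyclic].
  exact: spider_adj_sym.
exact: spider_adj_irr.
Qed.

Definition tip (l : 'I_k) : spider := Some (l, ord_max).

Lemma degree_neq1 x a b :
  a != b -> spider_adj x a -> spider_adj x b -> degree spider_adj x != 1.
Proof.
move=> ab adj_a adj_b; have : [set a; b] \subset [set y | spider_adj x y].
  by apply/subsetP => y /[!inE] /orP[]/eqP->.
by move/subset_leq_card; rewrite cards2 ab /degree; lia.
Qed.

Lemma degree_tip l : degree spider_adj (tip l) = 1.
Proof.
rewrite /degree -(cards1 (parent (tip l))); congr #|pred_of_set _|.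
apply/setP => -[[l' j]|] /[!inE]; rewrite /spider_adj /= ?orbF //.
case: (_ == _) => //=; have [// | j_gt0] := eqVneq (j : nat) 0.
apply/negP => /eqP [_] /(congr1 val) /=; rewrite inordK; have := ltn_ord j; lia.
Qed.

Lemma card_spider_leaves : 1 < k -> #|leaves spider_adj| = k.
Proof.
move=> k_gt1; suff -> : leaves spider_adj = tip @: [set: 'I_k].
  by rewrite card_imset ?cardsT ?card_ord // => l l' [].
apply/setP => -[[l j]|]; rewrite /leaves inE; last first.
  rewrite (negbTE (@degree_neq1 _ (Some (Ordinal (ltnW k_gt1), ord0))
                                  (Some (Ordinal k_gt1, ord0)) _ _ _)) //.
  by apply/esym/imsetP => -[].
have [j_max|j_lt] := eqVneq (j : nat) n.
  have -> : j = ord_max by apply: val_inj.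
  by rewrite degree_tip eqxx; apply/esym/imsetP; exists l.
have j_n : j < n by have := ltn_ord j; lia.
rewrite (negbTE (@degree_neq1 _ (parent (Some (l, j))) (Some (l, inord j.+1)) _ _ _)).
- by apply/esym/imsetP => -[l' _ [_ E]]; rewrite E eqxx in j_lt.
- apply/eqP => /(congr1 height); have := @height_parent (Some (l, j)) isT.
  by rewrite /= inordK; lia.
- exact: spider_adj_parent.
- by rewrite /spider_adj /= inordK //= inord_val eqxx orbT.
Qed.

Lemma parent_closed_subtree (A : {set spider}) r : r \in A ->
  (forall x, x \in A -> x != r -> (x != None) && (parent x \in A)) ->
  subtree spider_adj A.
Proof.
move=> r_in closedA; split; first by apply/set0Pn; exists r.
have symA : symmetric (restrict spider_adj A).
  by move=> x y; rewrite /restrict /= spider_adj_sym [(x \in A) && _]andbC.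
suff to_r x : x \in A -> connect (restrict spider_adj A) x r.
  by move=> x y /to_r xr /to_r; rewrite (sym_connect_sym symA); apply: connect_trans.
elim: {x}(height x) {-2}x (leqnn (height x)) => [|h IH] x x_h x_in;
  have [-> //|x_ne] := eqVneq x r; have /andP[x_ne0 px_in] := closedA x x_in x_ne.
  by have := height_parent x_ne0; lia.
apply: connect_trans (connect1 _) (IH _ _ px_in); last first.
  by have := height_parent x_ne0; lia.
by rewrite /restrict /= spider_adj_parent // x_in px_in.
Qed.

Definition ball (d : 'I_k -> nat) : {set spider} :=
  [set x : spider | if x is Some (l, j) then j < d l else true].

Definition link (l : 'I_k) (s : nat) : {set spider} :=
  [set x : spider | if x is Some (l', j) then (l' == l) && (s <= j <= s.+1) else false].

Lemma ball_subtree d : subtree spider_adj (ball d).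
Proof.
apply: (@parent_closed_subtree _ None); rewrite ?inE // => -[[l j]|] //.
rewrite inE /= => j_lt _; have [_|j_gt0] := eqVneq (j : nat) 0; rewrite inE //=.
by rewrite inordK; have := ltn_ord j; lia.
Qed.

Lemma link_subtree l s : s < n -> subtree spider_adj (link l s).
Proof.
move=> s_lt; apply: (@parent_closed_subtree _ (Some (l, inord s))).
  by rewrite inE /= eqxx inordK; lia.
move=> [[l' j]|] /[1!inE] //= /and3P[/eqP-> s_le j_le] ne_s.
have j_eq : j = s.+1 :> nat.
  suff : j != s :> nat by lia.
  apply: contraNneq ne_s => j_s; suff -> : j = inord s by [].
  by apply: val_inj; rewrite /= inordK; lia.
by rewrite j_eq /= inE eqxx inordK; lia.
Qed.

Lemma ball_diff_neq0 d d' :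
  (ball d :\: ball d' != set0) = [exists l, (d' l < d l) && (d' l <= n)].
Proof.
apply/set0Pn/existsP => [[[[l j]|]]|[l /andP[lt_d le_n]]]; rewrite ?inE //=.
  by move=> /andP[? ?]; exists l; have := ltn_ord j; lia.
by exists (Some (l, inord (d' l))); rewrite !inE /= inordK; lia.
Qed.

Lemma overlap_ball d d' : overlap (ball d) (ball d') =
  [exists l, (d' l < d l) && (d' l <= n)] && [exists l, (d l < d' l) && (d l <= n)].
Proof.
rewrite /overlap !ball_diff_neq0.
by have -> : ball d :&: ball d' != set0 by apply/set0Pn; exists None; rewrite !inE.
Qed.

Lemma overlap_link_ball l s d : s < n -> overlap (link l s) (ball d) = (d l == s.+1).
Proof.
move=> s_lt; rewrite /overlap.
have -> : ball d :\: link l s != set0 by apply/set0Pn; exists None; rewrite !inE.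
have -> : (link l s :&: ball d != set0) = (s < d l).
  apply/set0Pn/idP => [[[[l' j]|]]|d_gt]; rewrite ?inE //=.
    by move=> /andP[/and3P[/eqP<- ? ?] ?]; lia.
  by exists (Some (l, inord s)); rewrite !inE /= eqxx inordK; lia.
have -> : (link l s :\: ball d != set0) = (d l <= s.+1).
  apply/set0Pn/idP => [[[[l' j]|]]|d_le]; rewrite ?inE //=.
    by move=> /andP[? /and3P[/eqP<- ? ?]]; lia.
  by exists (Some (l, inord s.+1)); rewrite !inE /= eqxx inordK; lia.
by rewrite andbT eqn_leq andbC.
Qed.

Lemma overlap_link_link l l' p a b :
  overlap (link l (p + a.*2)) (link l' (p + b.*2)) = false.
Proof.
apply/negbTE/negP => /and3P[/set0Pn[[[l'' j]|]] /[!inE] //=].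
move=> /andP[/and3P[/eqP-> ? ?] /and3P[/eqP-> ? ?]].
have -> : a = b by lia.
by rewrite setDv eqxx.
Qed.

Lemma overlap_ball_eqsum d d' : (forall l, d l <= n) -> (forall l, d' l <= n) ->
  \sum_l d l = \sum_l d' l -> overlap (ball d) (ball d') = [exists l, d l != d' l].
Proof.
move=> d_le d'_le sum_dd'; rewrite overlap_ball.
have [ne|/existsPn eq_dd'] := boolP [exists l, d l != d' l]; last first.
  apply/negbTE/nandP; left; apply/existsPn => l.
  by rewrite (eqP (negPn (eq_dd' l))) ltnn.
have ne' : [exists l, d' l != d l].
  by case/existsP: ne => l ne_l; apply/existsP; exists l; rewrite eq_sym.
have /existsP[l1 lt1] := sum_eq_exists_gt sum_dd' ne.
have /existsP[l2 lt2] := sum_eq_exists_gt (esym sum_dd') ne'.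
by apply/andP; split; apply/existsP;
  [exists l1; rewrite lt1 d'_le|exists l2; rewrite lt2 d_le].
Qed.

End Spider.

Definition o0 : 'I_3 := @Ordinal 3 0 isT.
Definition o1 : 'I_3 := @Ordinal 3 1 isT.
Definition o2 : 'I_3 := @Ordinal 3 2 isT.

Lemma ord3P (l : 'I_3) : [\/ l = o0, l = o1 | l = o2].
Proof.
by case: l => [[|[|[|//]]] ?]; [constructor 1|constructor 2|constructor 3]; apply: val_inj.
Qed.

Lemma exists_ord3 (P : pred 'I_3) : [exists l, P l] = [|| P o0, P o1 | P o2].
Proof.
apply/existsP/idP => [[l]|/or3P[] ?]; [|by exists o0|by exists o1|by exists o2].
by case: (ord3P l) => -> ->; rewrite ?orbT.
Qed.

Lemma sum_ord3 (d : 'I_3 -> nat) a b w : a != b -> a != w -> b != w ->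
  \sum_l d l = d a + d b + d w.
Proof.
rewrite !big_ord_recr big_ord0 /=.
have -> : widen_ord (leqnSn 2) (widen_ord (leqnSn 1) ord_max) = o0 by apply: val_inj.
have -> : widen_ord (leqnSn 2) ord_max = o1 by apply: val_inj.
have -> : ord_max = o2 by apply: val_inj.
by case: (ord3P a) => ->; case: (ord3P b) => ->; case: (ord3P w) => -> //= _ _ _; lia.
Qed.

Lemma exists_third_colour (a b : 'I_3) : exists w, (a != w) && (b != w).
Proof.
by case: (ord3P a) => ->; case: (ord3P b) => ->;
  [exists o1|exists o2|exists o1|exists o2|exists o0|exists o0|exists o1|exists o0|exists o0].
Qed.

Section ColouredModel.
Variables (V : finType) (adj : rel V) (c : V -> 'I_3).
Hypothesis c_proper : forall x y, adj x y -> c x != c y.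

Definition nreps := #|{: 'I_6 * V}|.
(* Large enough for the depth [3 * base - slot_depth r - slot_depth r'] of an
   edge-representative on the leg of the third colour to stay positive. *)
Definition base := 4 * nreps + 4.
Definition len := base + 2 * nreps + 1.

Lemma base_len : base = 4 * nreps + 4 /\ len = base + 2 * nreps + 1.
Proof. by []. Qed.

Definition slot (r : 'I_6 * V) := base + (enum_rank r : nat).*2.
Definition slot_depth r := (slot r).+1.

Lemma slot_depth_inj : injective slot_depth.
Proof.
move=> r r' /eqP; rewrite /slot_depth /slot eqSS eqn_add2l -!muln2 eqn_pmul2r //.
by move/eqP/val_inj/enum_rank_inj.
Qed.

Lemma slot_depth_bounds r : base < slot_depth r < base + 2 * nreps.
Proof. have : enum_rank r < nreps := ltn_ord _; rewrite /slot_depth /slot; lia. Qed.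

Lemma slot_lt_len r : slot r < len.
Proof. have := slot_depth_bounds r; rewrite /len /slot_depth; lia. Qed.

Definition edge_depth (i : 'I_6) (f : {set V}) (l : 'I_3) : nat :=
  if [pick z in f | c z == l] is Some z then slot_depth (i, z)
  else 3 * base - \sum_(z in f) slot_depth (i, z).

Definition other_colour (a : 'I_3) : 'I_3 := if a == o0 then o1 else o0.

(* Unlike an edge depth, a brother depth exceeds [base] on a single leg. *)
Definition brother_depth (r : 'I_6 * V) (l : 'I_3) : nat :=
  if l == c r.2 then slot_depth r
  else if l == other_colour (c r.2) then base else 2 * base - slot_depth r.

Definition vs_depth (l : 'I_3) : nat := if l == o0 then len.+1 else 0.
Definition vb_depth (l : 'I_3) : nat := if l == o2 then 0 else len.+1.
Definition x_depth (l : 'I_3) : nat := if l == o2 then 1 else 0.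

Definition clique_depth (d : 'I_3 -> nat) :=
  (forall l, 0 < d l <= len) /\ \sum_l d l = 3 * base.

Lemma edge_depth_endpoint i x y :
  c x != c y -> edge_depth i [set x; y] (c x) = slot_depth (i, x).
Proof.
move=> cxy; rewrite /edge_depth; case: pickP => [z /andP[]|/(_ x)].
  by rewrite !inE => /orP[]/eqP-> // /eqP cyx; rewrite cyx eqxx in cxy.
by rewrite !inE !eqxx.
Qed.

Lemma edge_depth_third i x y l : c x != c y -> l != c x -> l != c y ->
  edge_depth i [set x; y] l = 3 * base - (slot_depth (i, x) + slot_depth (i, y)).
Proof.
move=> cxy lx ly; rewrite /edge_depth; case: pickP => [z /andP[]|_].
  by rewrite !inE => /orP[]/eqP-> /eqP ?; subst l; rewrite eqxx in lx ly.
have xy : x != y by apply: contraNneq cxy => ->.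
by rewrite big_setU1 ?big_set1 ?inE.
Qed.

Lemma edgeP (f : edgeT adj) : exists x y, c x != c y /\ val f = [set x; y].
Proof.
by have /existsP[x /existsP[y /andP[/c_proper cxy /eqP->]]] := valP f; exists x, y.
Qed.

Lemma edge_depth_eq_slot_endpoint i i' x y z : c x != c y -> c z = c x ->
  (edge_depth i [set x; y] (c z) == slot_depth (i', z)) = (i == i') && (z \in [set x; y]).
Proof.
move=> cxy zx; rewrite zx edge_depth_endpoint // !inE.
apply/eqP/andP => [/slot_depth_inj[->->]|]; first by rewrite !eqxx.
by case=> /eqP<- /orP[/eqP->//|/eqP yz]; rewrite -yz zx eqxx in cxy.
Qed.

Lemma edge_depth_eq_slot i i' (f : edgeT adj) z :
  (edge_depth i (val f) (c z) == slot_depth (i', z)) = (i == i') && (z \in val f).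
Proof.
have [x [y [cxy ->]]] := edgeP f.
have [zx|zx] := eqVneq (c z) (c x); first exact: edge_depth_eq_slot_endpoint.
have [zy|zy] := eqVneq (c z) (c y).
  by rewrite setUC edge_depth_eq_slot_endpoint // eq_sym.
rewrite edge_depth_third // !inE.
have := slot_depth_bounds (i', z); have := slot_depth_bounds (i, x).
have := slot_depth_bounds (i, y) => ? ? ?.
rewrite (_ : _ == _ = false); last by apply/eqP; lia.
by apply/esym/negbTE/andP => -[_ /orP[]/eqP zE]; [move: zx|move: zy]; rewrite zE eqxx.
Qed.

Lemma other_colour_neq a : a != other_colour a.
Proof. by rewrite /other_colour; case: (ord3P a) => ->. Qed.

Lemma brother_depth_off r l : l != c r.2 -> brother_depth r l <= base.
Proof.
move=> /negbTE lr; have := slot_depth_bounds r.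
by rewrite /brother_depth lr; case: ifP => _; lia.
Qed.

Lemma brother_depth_eq_slot r i' z :
  (brother_depth r (c z) == slot_depth (i', z)) = (r == (i', z)).
Proof.
have [zr|zr] := eqVneq (c z) (c r.2).
  by rewrite /brother_depth zr eqxx (inj_eq slot_depth_inj).
have := brother_depth_off zr; have := slot_depth_bounds (i', z) => ? ?.
rewrite (_ : _ == _ = false); last by apply/eqP; lia.
by apply/esym/negbTE; apply: contraNneq zr => ->.
Qed.

Lemma clique_depth_edge i (f : edgeT adj) : clique_depth (edge_depth i (val f)).
Proof.
have [x [y [cxy ->]]] := edgeP f; have [w /andP[xw yw]] := exists_third_colour (c x) (c y).
have := slot_depth_bounds (i, x); have := slot_depth_bounds (i, y).
have [? ?] := base_len; move=> ? ?; split.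
  move=> l; have [->|lx] := eqVneq l (c x); first by rewrite edge_depth_endpoint; lia.
  have [->|ly] := eqVneq l (c y); first by rewrite setUC edge_depth_endpoint 1?eq_sym; lia.
  by rewrite edge_depth_third //; lia.
rewrite (sum_ord3 _ cxy xw yw) edge_depth_endpoint // setUC edge_depth_endpoint 1?eq_sym //.
by rewrite setUC edge_depth_third // ?(eq_sym w) //; lia.
Qed.

Lemma clique_depth_brother r : clique_depth (brother_depth r).
Proof.
set a := c r.2; have a_oth := other_colour_neq a.
have [w /andP[aw othw]] := exists_third_colour a (other_colour a).
have dw : brother_depth r w = 2 * base - slot_depth r.
  by rewrite /brother_depth -/a eq_sym (negbTE aw) eq_sym (negbTE othw).
have [? ?] := base_len; have := slot_depth_bounds r => ?; split.
  move=> l; have [->|la] := eqVneq l a; first by rewrite /brother_depth eqxx; lia.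
  have [->|loth] := eqVneq l (other_colour a).
    by rewrite /brother_depth -/a eq_sym (negbTE a_oth) eqxx; lia.
  by rewrite /brother_depth -/a (negbTE la) (negbTE loth); lia.
rewrite (sum_ord3 _ a_oth aw othw) dw /brother_depth -/a eqxx eq_sym (negbTE a_oth) eqxx.
lia.
Qed.

Lemma edge_depth_inj i i' (f f' : edgeT adj) :
  edge_depth i (val f) =1 edge_depth i' (val f') -> (i, f) = (i', f').
Proof.
move=> eq_ff'; have [x [y [_ f_xy]]] := edgeP f.
have mem_f z : z \in val f = (i' == i) && (z \in val f').
  by rewrite -edge_depth_eq_slot -eq_ff' edge_depth_eq_slot (eqxx i).
have /andP[/eqP ii' _] : (i' == i) && (x \in val f') by rewrite -mem_f f_xy !inE eqxx.
by subst i'; congr pair; apply/val_inj/setP => z; rewrite mem_f (eqxx i).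
Qed.

Lemma brother_depth_inj r r' : brother_depth r =1 brother_depth r' -> r = r'.
Proof.
case: r => i z eq_rr'.
by apply/eqP; rewrite eq_sym -brother_depth_eq_slot -eq_rr' brother_depth_eq_slot.
Qed.

Lemma edge_depth_neq_brother i (f : edgeT adj) r :
  ~ edge_depth i (val f) =1 brother_depth r.
Proof.
move=> eq_fr; have [x [y [cxy f_xy]]] := edgeP f.
have colour_r z : z \in val f -> c z = c r.2.
  move=> zf; have := edge_depth_eq_slot i i f z; rewrite (eqxx i) zf eq_fr => /eqP.
  by apply: contra_eq => /brother_depth_off; have := slot_depth_bounds (i, z); lia.
by rewrite !colour_r ?f_xy ?inE ?eqxx ?orbT in cxy.
Qed.

Local Notation ball := (@ball 3 len).
Local Notation link := (@link 3 len).

Lemma overlap_clique d d' : clique_depth d -> clique_depth d' ->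
  overlap (ball d) (ball d') = [exists l, d l != d' l].
Proof.
move=> [d_bd d_sum] [d'_bd d'_sum].
apply: overlap_ball_eqsum; rewrite ?d_sum ?d'_sum // => l.
  by case/andP: (d_bd l).
by case/andP: (d'_bd l).
Qed.

Lemma overlap_clique_vs d : clique_depth d -> overlap (ball d) (ball vs_depth).
Proof.
case=> d_bd _; move: (d_bd o0) (d_bd o1) (d_bd o2).
by rewrite overlap_ball !exists_ord3 /vs_depth /=; lia.
Qed.

Lemma overlap_clique_vb d : clique_depth d -> overlap (ball d) (ball vb_depth).
Proof.
case=> d_bd _; move: (d_bd o0) (d_bd o1) (d_bd o2).
by rewrite overlap_ball !exists_ord3 /vb_depth /=; lia.
Qed.

Lemma overlap_clique_x d : clique_depth d -> overlap (ball d) (ball x_depth) = false.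
Proof.
case=> d_bd _; move: (d_bd o0) (d_bd o1) (d_bd o2).
by rewrite overlap_ball !exists_ord3 /x_depth /=; lia.
Qed.

Lemma overlap_vs_vb : overlap (ball vs_depth) (ball vb_depth) = false.
Proof. by rewrite overlap_ball !exists_ord3 /vs_depth /vb_depth /=; lia. Qed.

Lemma overlap_vs_x : overlap (ball vs_depth) (ball x_depth).
Proof. by rewrite overlap_ball !exists_ord3 /vs_depth /x_depth /=; lia. Qed.

Lemma overlap_vb_x : overlap (ball vb_depth) (ball x_depth).
Proof. by rewrite overlap_ball !exists_ord3 /vb_depth /x_depth /=; lia. Qed.

Lemma overlap_link_ball_shallow_or_full r l d :
  (forall l, d l <= 1 \/ d l = len.+1) -> overlap (link l (slot r)) (ball d) = false.
Proof.
move=> d_ext; rewrite overlap_link_ball ?slot_lt_len //; apply/negbTE/eqP => d_l.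
have [? ?] := base_len; have := slot_depth_bounds r; rewrite /slot_depth.
by case: (d_ext l); rewrite d_l; lia.
Qed.

#[local] Hint Resolve clique_depth_edge clique_depth_brother : core.

Definition rep (u : blockedT adj) : {set spider 3 len} :=
  match u with
  | inl (inl (i, v)) => link (c v) (slot (i, v))
  | inl (inr (i, f)) => ball (edge_depth i (val f))
  | inr (inl r) => ball (brother_depth r)
  | inr (inr (inl true)) => ball vs_depth
  | inr (inr (inl false)) => ball vb_depth
  | inr (inr (inr _)) => ball x_depth
  end.

Definition part (u : blockedT adj) : nat :=
  match u with
  | inl (inl _) => 0 | inl (inr _) => 1 | inr (inl _) => 2
  | inr (inr (inl true)) => 3 | inr (inr (inl false)) => 4 | inr (inr (inr _)) => 5
  end.

Lemma blocked_adjC : symmetric (@blocked_adj V adj).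
Proof. by move=> u w; rewrite /blocked_adj orbC. Qed.

Lemma blocked_adj_overlap u w : blocked_adj u w = overlap (rep u) (rep w).
Proof.
wlog le_uw : u w / part u <= part w.
  move=> gen; case: (leqP (part u) (part w)) => [/gen //|/ltnW/gen].
  by rewrite blocked_adjC overlapC.
have ext_vs l : vs_depth l <= 1 \/ vs_depth l = len.+1 by rewrite /vs_depth; case: ifP; auto.
have ext_vb l : vb_depth l <= 1 \/ vb_depth l = len.+1 by rewrite /vb_depth; case: ifP; auto.
have ext_x l : x_depth l <= 1 \/ x_depth l = len.+1 by rewrite /x_depth; case: ifP; auto.
case: u le_uw => [[[i v]|[i f]]|[[i v]|[[]|k]]];
case: w => [[[j x]|[j g]]|[[j x]|[[]|k']]] le_uw; try discriminate le_uw; clear le_uw.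
all: rewrite /blocked_adj /blocked_half /rep.
all: cbv beta iota; rewrite ?orbF ?overlapxx ?overlap_vs_vb ?overlap_vs_x ?overlap_vb_x //.
all: rewrite ?(overlap_link_ball_shallow_or_full _ _ ext_vs)
  ?(overlap_link_ball_shallow_or_full _ _ ext_vb) ?(overlap_link_ball_shallow_or_full _ _ ext_x).
all: rewrite ?overlap_clique_vs ?overlap_clique_vb ?overlap_clique_x //.
- by rewrite /slot overlap_link_link.
- by rewrite overlap_link_ball ?slot_lt_len // edge_depth_eq_slot (eq_sym j).
- rewrite overlap_link_ball ?slot_lt_len // brother_depth_eq_slot xpair_eqE.
  by rewrite (eq_sym j) (eq_sym x).
- rewrite overlap_clique // orb_neq_sym; apply/esym/exists_neq_iff.
  by split=> [/edge_depth_inj [-> ->]|[-> ->]].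
- by rewrite overlap_clique // exists_neq_fun //; apply: edge_depth_neq_brother.
- rewrite overlap_clique // orb_neq_sym; apply/esym/exists_neq_iff.
  by split=> [/brother_depth_inj [-> ->]|[-> ->]].
Qed.

End ColouredModel.

Theorem lemma5 (V : finType) (adj : rel V) :
  simple_graph adj ->
  k_connected 3 adj ->
  colourable 3 adj ->
  overlap_graph_of_subtrees_k_leaves 3 (@blocked_adj V adj).
Proof.
move=> _ _ [c c_proper].
exists (spider 3 (len V)), (@spider_adj 3 (len V)), (@rep V adj c); split.
- exact: spider_is_tree.
- exact: card_spider_leaves.
- case=> [[[i v]|[i f]]|[[i v]|[[]|k]]]; try exact: ball_subtree.
  exact/link_subtree/slot_lt_len.
- exact: blocked_adj_overlap.
Qed.
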